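(* Let $(G,c,(k_i)_{i=1}^t)$ be an instance of \textsc{$\mathbb{T}$-Fair Feedback Vertex Set} and let $n_i=c_i(V(G))$. Let $G'$ be the graph with $V(G')=V(G)\cup\{v_0\}$ and $E(G')=E(G)\cup E_0$, where $v_0\notin V(G)$ and $E_0=\{vv_0 : v\in V(G)\}$. Let $c':V(G')\to 2^{[t]}\setminus\{\emptyset\}$ be given by $c'(v_0)=[t]$ and $c'(v)=c(v)$ for $v\in V(G)$. Then $G$ has a $(k_i)_{i=1}^t$-fair feedback vertex set if and only if there exists a pair $(X,X_0)$ such that (a) $X\subseteq V(G)\cup\{v_0\}$ with $v_0\in X$ and $X_0\subseteq E_0$; (b) the subgraph of $G'$ with vertex set $X$ and edge set $E_{G'}[X\setminus\{v_0\}]\cup X_0$ is connected; (c) $|E_{G'}[X\setminus\{v_0\}]\cup X_0|=|X|-1$; and (d) $c'_i(X)=n_i-k_i+1$ for every $i\in[t]$.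
   Context: $[t]=\{1,\dots,t\}$. A $t$-coloured graph is $(G,c)$ with $c:V(G)\to 2^{[t]}\setminus\{\emptyset\}$; for $S$ a vertex set, $c_i(S)=|\{v\in S: i\in c(v)\}|$ (similarly $c'_i$ for $c'$). A set $F\subseteq V(G)$ is a $(k_i)_{i=1}^t$-fair feedback vertex set if $G-F$ is acyclic and $c_i(F)=k_i$ for every $i$. For $Y\subseteq V(G')$, $E_{G'}[Y]$ denotes the set of edges of $G'$ with both endpoints in $Y$. *)

From mathcomp Require Import all_boot.
Set Implicit Arguments. Unset Strict Implicit. Unset Printing Implicit Defensive.

(* A simple graph on a finType T is a symmetric irreflexive relation e.
   Colours [t] are represented by 'I_t. *)

Section Defs.
Variable T : finType.

Definition ccount (t : nat) (c : T -> {set 'I_t}) (i : 'I_t) (S : {set T}) : nat :=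
  #|[set v in S | i \in c v]|.

Definition cycle_avoiding (e : rel T) (F : {set T}) (s : seq T) : Prop :=
  [/\ 3 <= size s, uniq s, cycle e s & all (fun v => v \notin F) s].

Definition acyclic_minus (e : rel T) (F : {set T}) : Prop :=
  ~ exists s : seq T, cycle_avoiding e F s.

Definition fair_fvs (t : nat) (e : rel T) (c : T -> {set 'I_t})
    (k : 'I_t -> nat) (F : {set T}) : Prop :=
  acyclic_minus e F /\ forall i : 'I_t, ccount c i F = k i.

Definition induced_edges (e : rel T) (Y : {set T}) : {set {set T}} :=
  [set [set x; y] | x in Y, y in Y & e x y].

Definition sub_connected (X : {set T}) (Ed : {set {set T}}) : Prop :=
  forall x y, x \in X -> y \in X ->
    connect (fun u v => [set u; v] \in Ed) x y.
End Defs.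

(* G' : vertex set option T, with v0 = None adjacent to every old vertex *)
Definition cone_rel (T : finType) (e : rel T) : rel (option T) :=
  fun x y => match x, y with
             | Some u, Some v => e u v
             | Some _, None => true
             | None, Some _ => true
             | None, None => false
             end.

Definition E0 (T : finType) : {set {set option T}} :=
  [set [set Some v; None] | v : T].

Definition cone_col (T : finType) (t : nat) (c : T -> {set 'I_t}) :
    option T -> {set 'I_t} :=
  fun x => match x with Some v => c v | None => [set: 'I_t] end.

From mathcomp Require Import all_boot.
From Stdlib Require Import Classical.
From mathcomp Require Import zify.
Set Implicit Arguments. Unset Strict Implicit. Unset Printing Implicit Defensive.

(* A finite graph with edge set E and m connected components satisfies
   |V| <= |E| + m, with equality exactly when it is acyclic: delete the edges
   one at a time; deleting an edge that lies on a cycle keeps the components,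
   deleting any other edge (a bridge) splits one component into two.
   If G - F is a forest, joining v0 to one vertex of each of its components
   therefore gives a spanning tree of G'[(V - F) + v0]. Conversely, a
   connected graph on X with |X| - 1 edges is a tree, so G - (V - X) is a
   forest. In both directions c'_i(X) = 1 + n_i - c_i(V - X). *)

Lemma set2_eq (T : finType) (u v x y : T) :
  [set u; v] = [set x; y] -> (u, v) = (x, y) \/ (u, v) = (y, x).
Proof.
move=> uv_xy.
have u_xy : u \in [set x; y] by rewrite -uv_xy set21.
have v_xy : v \in [set x; y] by rewrite -uv_xy set22.
have x_uv : x \in [set u; v] by rewrite uv_xy set21.
have y_uv : y \in [set u; v] by rewrite uv_xy set22.
case/set2P: u_xy v_xy x_uv y_uv => ? /set2P[] ? /set2P[] ? /set2P[] ?;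
  by subst; auto.
Qed.

Section EdgeSets.
Variable U : finType.
Implicit Types (E : {set {set U}}) (R X : {set U}).

Definition adj E : rel U := fun u v => [set u; v] \in E.

Definition has_cycle E :=
  exists s : seq U, [/\ 3 <= size s, uniq s & cycle (adj E) s].

Definition simple E := {in E, forall f : {set U}, #|f| = 2}.

Definition component_reps E R :=
  (forall v, exists2 r, r \in R & connect (adj E) v r) /\
  {in R &, forall r1 r2, connect (adj E) r1 r2 -> r1 = r2}.

Lemma adj_sym E : symmetric (adj E).
Proof. by move=> u v; rewrite /adj setUC. Qed.

Lemma connect_adj_sym E : connect_sym (adj E).
Proof. exact/sym_connect_sym/adj_sym. Qed.

Lemma adj_subset E1 E2 : E1 \subset E2 -> subrel (adj E1) (adj E2).
Proof. by move/subsetP=> sE u v; apply: sE. Qed.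

Lemma connect_subset E1 E2 :
  E1 \subset E2 -> subrel (connect (adj E1)) (connect (adj E2)).
Proof. by move/adj_subset=> sE; apply: connect_sub => u v /sE/connect1. Qed.

Lemma simpleU E1 E2 : simple E1 -> simple E2 -> simple (E1 :|: E2).
Proof. by move=> s1 s2 f /setUP[/s1 | /s2]. Qed.

Lemma has_cycle_subset E1 E2 : E1 \subset E2 -> has_cycle E1 -> has_cycle E2.
Proof.
by move/adj_subset=> sE [s [s3 us cs]]; exists s; split=> //; apply: sub_cycle cs.
Qed.

Section DeleteEdge.
Variables (E : {set {set U}}) (x y : U).
Local Notation E' := (E :\ [set x; y]).

Lemma adj_setD1 u v : u \notin [set x; y] -> adj E u v -> adj E' u v.
Proof.
rewrite /adj in_setD1 => uxy ->; rewrite andbT.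
by apply: contraNneq uxy => <-; rewrite set21.
Qed.

Lemma path_setD1 u p :
  all [predC [set x; y]] (belast u p) -> path (adj E) u p -> path (adj E') u p.
Proof.
elim: p u => //= v p IHp u /andP[uxy out] /andP[Euv Ep].
by rewrite adj_setD1 ?IHp.
Qed.

Lemma connect_setD1 u v : connect (adj E) u v ->
  [|| connect (adj E') u v, connect (adj E') u x | connect (adj E') u y].
Proof.
move=> Euv; apply/negPn/negP; rewrite !negb_or => /and3P[nuv nux nuy].
have cl : closed (adj E) (connect (adj E') u).
  apply: (intro_closed (connect_adj_sym E)) => w z Ewz; rewrite !inE => uw.
  have wxy : w \notin [set x; y].
    by rewrite !inE; apply/norP; split; apply/eqP=> wE; subst w;
      [rewrite uw in nux | rewrite uw in nuy].
  exact: connect_trans uw (connect1 (adj_setD1 wxy Ewz)).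
by have := closed_connect cl Euv; rewrite !inE connect0 (negbTE nuv).
Qed.

Lemma connect_setD1_nonbridge :
  connect (adj E') x y -> connect (adj E) =2 connect (adj E').
Proof.
move=> cxy u v; apply/idP/idP; last first.
  exact: (connect_subset (subD1set E _)).
have to_x w z : connect (adj E) w z ->
    connect (adj E') w z \/ connect (adj E') w x.
  case/connect_setD1/or3P=> [|wx|wy]; [by left | by right |].
  by right; apply: connect_trans wy _; rewrite connect_adj_sym.
move=> Euv; case: (to_x _ _ Euv) => [//|ux].
have /to_x[vu|vx] : connect (adj E) v u by rewrite connect_adj_sym.
  by rewrite connect_adj_sym.
by apply: connect_trans ux _; rewrite connect_adj_sym.
Qed.

Lemma component_reps_nonbridge R : connect (adj E') x y ->
  component_reps E' R -> component_reps E R.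
Proof.
move=> /connect_setD1_nonbridge eqE [rep rep_uniq].
split=> [v | r1 r2 r1R r2R]; last by rewrite eqE; apply: rep_uniq.
by have [r rR vr] := rep v; exists r; rewrite ?eqE.
Qed.

Lemma component_reps_bridge R : [set x; y] \in E -> ~~ connect (adj E') x y ->
  component_reps E' R -> exists2 r, r \in R & component_reps E (R :\ r).
Proof.
move=> Exy nxy [rep rep_uniq].
have [rx rxR xrx] := rep x; have [ry ryR yry] := rep y.
have rep_x r : r \in R :\ ry ->
    connect (adj E') r x || connect (adj E') r y -> r = rx.
  rewrite in_setD1 => /andP[rry rR] /orP[rx' | ry'].
    exact: rep_uniq rR rxR (connect_trans rx' xrx).
  by rewrite (rep_uniq r ry) ?eqxx ?(connect_trans ry' yry) in rry.
have rxD : rx \in R :\ ry.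
  rewrite in_setD1 rxR andbT; apply: contraNneq nxy => rxy.
  by rewrite (connect_trans xrx) // rxy connect_adj_sym.
have E'E := connect_subset (subD1set E [set x; y]).
exists ry => //; split.
  move=> v; have [r rR vr] := rep v; have [rry | nrry] := eqVneq r ry.
    exists rx => //; apply: connect_trans (E'E _ _ vr) _; rewrite rry.
    have ryy : connect (adj E) ry y by apply: E'E; rewrite connect_adj_sym.
    have yx : connect (adj E) y x by apply: connect1; rewrite adj_sym.
    exact: connect_trans ryy (connect_trans yx (E'E _ _ xrx)).
  by exists r; [rewrite in_setD1 nrry | exact: E'E].
have split_rep r w : r \in R :\ ry -> connect (adj E) r w ->
    connect (adj E') r w \/ r = rx.
  move=> rD /connect_setD1/or3P[rw | rx' | ry']; first by left.
    by right; apply: rep_x; rewrite // rx'.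
  by right; apply: rep_x; rewrite // ry' orbT.
move=> r1 r2 r1D r2D E12.
have E21 : connect (adj E) r2 r1 by rewrite connect_adj_sym.
have inR r : r \in R :\ ry -> r \in R by rewrite in_setD1 => /andP[].
case: (split_rep _ _ r1D E12) (split_rep _ _ r2D E21) =>
  [r12 _ | -> [r21 | ->] //].
  exact: rep_uniq (inR _ r1D) (inR _ r2D) r12.
by rewrite (rep_uniq r2 rx (inR _ r2D) rxR r21).
Qed.

Lemma nonbridge_cycle : x != y -> [set x; y] \in E ->
  connect (adj E') x y -> has_cycle E.
Proof.
move=> xy Exy /connectP[p Ep ey]; case: (shortenP Ep) ey => p' Ep' up' _ ey.
have Ep'E : path (adj E) x p' by apply: sub_path Ep'; exact/adj_subset/subD1set.
exists (x :: p'); split => //=; last by rewrite rcons_path Ep'E -ey adj_sym.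
case: p' Ep' up' {Ep'E} ey => [|z [|w r]] //= Ep' _ ey.
  by rewrite ey eqxx in xy.
by rewrite -ey /adj in_setD1 eqxx in Ep'.
Qed.

End DeleteEdge.

Lemma has_cycle_nonbridge E : has_cycle E ->
  exists x y, [set x; y] \in E /\ connect (adj (E :\ [set x; y])) x y.
Proof.
case=> [[|a [|b [|c q]]] [] //= _ + /and3P[Eab Ebc Ecq]].
rewrite in_cons => /and4P[/norP[_ aq] bq _ _].
have out : all [predC [set b; a]] (c :: q).
  apply/allP=> w wq; rewrite !inE negb_or.
  by apply/andP; split; [apply: contraNneq bq | apply: contraNneq aq] => <-.
exists b, a; split; first by rewrite setUC.
apply/connectP; exists (c :: rcons q a); last by rewrite /= last_rcons.
rewrite /=; apply/andP; split; last by apply: path_setD1; rewrite ?belast_rcons.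
by rewrite adj_sym; apply: adj_setD1; [case/andP: out | rewrite adj_sym].
Qed.

Lemma component_reps_set0 : component_reps set0 [set: U].
Proof.
split=> [v | r1 r2 _ _ /connectP[[|z p] //= + ->]]; last by rewrite /adj inE.
by exists v; rewrite ?inE.
Qed.

Lemma has_cycle_set0 : ~ has_cycle set0.
Proof. by case=> [[|a [|b s]] [//= _ _]]; rewrite /= /adj inE. Qed.

Lemma component_reps_card E : simple E -> exists R, [/\ component_reps E R,
  #|U| <= #|E| + #|R| & #|U| = #|E| + #|R| <-> ~ has_cycle E].
Proof.
have [n] := ubnP #|E|; elim: n E => // n IHn E /ltnSE-leEn simpleE.
have [-> | [f Ef]] := set_0Vmem E.
  exists [set: U]; split; first exact: component_reps_set0.
    by rewrite cards0 cardsT.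
  by split=> _; [exact: has_cycle_set0 | rewrite cards0 cardsT].
have IHD g : g \in E -> exists R, [/\ component_reps (E :\ g) R,
    #|U| <= #|E :\ g| + #|R| & #|U| = #|E :\ g| + #|R| <-> ~ has_cycle (E :\ g)].
  move=> Eg; apply: IHn; first by rewrite (cardsD1 g E) Eg in leEn.
  by move=> h /setD1P[_]; apply: simpleE.
have cycD g : has_cycle (E :\ g) -> has_cycle E.
  exact/has_cycle_subset/subD1set.
have [cycE | acycE] := classic (has_cycle E).
  have [x [y [Exy cxy]]] := has_cycle_nonbridge cycE.
  have [R [repR leR eqR]] := IHD _ Exy.
  have ltR : #|U| < #|E| + #|R| by rewrite (cardsD1 [set x; y] E) Exy addSn ltnS.
  exists R; split; first exact: component_reps_nonbridge repR.
    exact: ltnW.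
  by split=> [eqU | /(_ cycE)//]; rewrite eqU ltnn in ltR.
have /cards2P[x [y [xy fE]]] : #|f| == 2 by rewrite simpleE.
subst f.
have nxy : ~~ connect (adj (E :\ [set x; y])) x y.
  by apply: contra_notN acycE => /(nonbridge_cycle xy Ef).
have [R [repR leR eqR]] := IHD _ Ef.
have [r rR repE] := component_reps_bridge Ef nxy repR.
have cardE : #|E| + #|R :\ r| = #|E :\ [set x; y]| + #|R|.
  by rewrite (cardsD1 [set x; y] E) (cardsD1 r R) Ef rR addSnnS.
exists (R :\ r); split; rewrite // cardE //; split=> // _.
by apply/eqR=> /cycD.
Qed.

Lemma connected_acyclic E X : simple E -> #|E| < #|X| ->
  {in X &, forall x y, connect (adj E) x y} -> ~ has_cycle E.
Proof.
move=> simpleE ltEX connX.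
have [R [[_ rep_uniq] leR eqR]] := component_reps_card simpleE.
have RX : #|R :&: X| <= 1.
  apply/card_le1_eqP=> r1 r2 /setIP[r1R r1X] /setIP[r2R r2X].
  exact/esym/(rep_uniq r1 r2 r1R r2R)/connX.
have RXc : #|R :\: X| <= #|~: X| by rewrite setDE subset_leq_card ?subsetIr.
apply/eqR/eqP; rewrite eqn_leq leR -(cardsC X) -(cardsID X R); lia.
Qed.

End EdgeSets.



Section EdgeImage.
Variables (T T' : finType) (f : T -> T').

Lemma imset_set2 (u v : T) : f @: [set u; v] = [set f u; f v].
Proof. by rewrite imsetU1 imset_set1. Qed.

Lemma induced_edges_imset (e : rel T) (e' : rel T') (Y : {set T}) :
  {mono f : x y / e x y >-> e' x y} ->
  induced_edges e' (f @: Y) = [set f @: g | g : {set T} in induced_edges e Y].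
Proof.
move=> f_mono; apply/setP=> g; apply/idP/idP.
  case/imset2P=> _ y /imsetP[u uY ->]; rewrite inE => /andP[/imsetP[w wY ->]].
  rewrite f_mono -imset_set2 => euw ->.
  by apply/imset_f/imset2_f; rewrite // inE wY.
case/imsetP=> h /imset2P[u w uY]; rewrite inE => /andP[wY euw] -> ->.
by rewrite imset_set2; apply: imset2_f; rewrite ?inE ?imset_f ?f_mono.
Qed.

Hypothesis f_inj : injective f.

Lemma adj_imset (E : {set {set T}}) :
  {mono f : u v / adj E u v >-> adj [set f @: g | g : {set T} in E] u v}.
Proof.
by move=> u v; rewrite /adj -imset_set2 mem_imset //; apply: imset_inj.
Qed.

Lemma has_cycle_imset (E : {set {set T}}) :
  has_cycle E -> has_cycle [set f @: g | g : {set T} in E].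
Proof.
move=> [s [s3 us cs]]; exists (map f s).
by rewrite size_map map_inj_uniq // cycle_map (eq_cycle (adj_imset E)).
Qed.

Lemma connect_imset (E : {set {set T}}) u v : connect (adj E) u v ->
  connect (adj [set f @: g | g : {set T} in E]) (f u) (f v).
Proof.
move=> /connectP[p Ep ->]; apply/connectP; exists (map f p).
  by rewrite path_map (eq_path (adj_imset E)).
by rewrite last_map.
Qed.

End EdgeImage.

Section InducedEdges.
Variables (T : finType) (e : rel T).

Lemma induced_edges_simple (Y : {set T}) :
  irreflexive e -> simple (induced_edges e Y).
Proof.
move=> e_irr f /imset2P[x y _]; rewrite inE => /andP[_ exy] ->.
by rewrite cards2; case: eqVneq exy => [-> | //]; rewrite e_irr.
Qed.

Lemma adj_induced_edges (Y : {set T}) u v :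
  symmetric e -> adj (induced_edges e Y) u v = [&& u \in Y, v \in Y & e u v].
Proof.
move=> e_sym; apply/imset2P/and3P => [[x y xY] | [uY vY euv]].
  rewrite inE => /andP[yY exy] /set2_eq[[-> ->] | [-> ->]].
    by rewrite xY yY.
  by rewrite xY yY e_sym.
by exists u v; rewrite // inE vY.
Qed.

Lemma connect_induced_edges_notin (Y : {set T}) u v : symmetric e ->
  u \notin Y -> connect (adj (induced_edges e Y)) u v -> v = u.
Proof.
move=> e_sym uY /connectP[[|z p] /=]; first by move=> _ ->.
by rewrite adj_induced_edges // (negbTE uY).
Qed.

End InducedEdges.

Section Cone.
Variables (T : finType) (e : rel T).
Hypotheses (e_sym : symmetric e) (e_irr : irreflexive e).

Local Notation cone_edges X X0 :=
  (induced_edges (cone_rel e) (X :\ None) :|: X0).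

Lemma acyclic_minusP F :
  acyclic_minus e F <-> ~ has_cycle (induced_edges e (~: F)).
Proof.
have adjF u v :
    adj (induced_edges e (~: F)) u v = [&& u \notin F, v \notin F & e u v].
  by rewrite adj_induced_edges // !inE.
split=> [acyc [s [s3 us cs]] | acyc [s [s3 us cs out]]]; apply: acyc; exists s.
  split=> //; first by apply: sub_cycle cs => u v; rewrite adjF => /and3P[].
  by apply/allP=> v vs; have := next_cycle cs vs; rewrite adjF => /and3P[].
split=> //; apply: sub_in_cycle out cs => u v uF vF euv.
by rewrite adjF; apply/and3P.
Qed.

Lemma cone_rel_irr : irreflexive (cone_rel e).
Proof. by case=> //= v; apply: e_irr. Qed.

Definition cone_set (F : {set T}) : {set option T} := None |: (Some @: ~: F).

Lemma None_in_cone_set F : None \in cone_set F.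
Proof. exact: setU11. Qed.

Lemma mem_cone_set F v : (Some v \in cone_set F) = (v \notin F).
Proof. by rewrite !inE /= mem_imset ?inE //; apply: Some_inj. Qed.

Lemma cone_setK F : [set v | Some v \notin cone_set F] = F.
Proof. by apply/setP=> v; rewrite inE mem_cone_set negbK. Qed.

Lemma card_cone_set F : #|cone_set F| = #|~: F|.+1.
Proof.
rewrite cardsU1 card_imset; last exact: Some_inj.
by have -> : None \notin Some @: ~: F by apply/imsetP=> [[]].
Qed.

Lemma cone_induced_edges F : induced_edges (cone_rel e) (cone_set F :\ None) =
  [set Some @: g | g : {set T} in induced_edges e (~: F)].
Proof.
rewrite setU1K; first exact: induced_edges_imset.
by apply/imsetP=> [[]].
Qed.

Section ForestCone.
Variables (F R : {set T}).
Hypothesis repR : component_reps (induced_edges e (~: F)) R.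

Local Notation X0 := [set [set Some r; None] | r in R :\: F].


Lemma fvs_subset_reps : F \subset R.
Proof.
apply/subsetP=> f fF; have [r rR fr] := repR.1 f.
by rewrite -(connect_induced_edges_notin e_sym _ fr) // inE negbK.
Qed.

Lemma cone_forest_connected :
  sub_connected (cone_set F) (cone_edges (cone_set F) X0).
Proof.
have to_cone z :
    z \in cone_set F -> connect (adj (cone_edges (cone_set F) X0)) z None.
  case: z => [v | _]; last exact: connect0.
  rewrite mem_cone_set => vF; have [r rR vr] := repR.1 v.
  have rF : r \notin F.
    apply: contraNN vF => rF; rewrite connect_adj_sym in vr.
    by rewrite (connect_induced_edges_notin e_sym _ vr) // inE negbK.
  apply: (@connect_trans _ _ (Some r)).
    apply: connect_subset (subsetUl _ _) _ _ _.
    by rewrite cone_induced_edges; exact: (connect_imset Some_inj vr).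
  apply: connect1; rewrite /adj inE orbC.
  by rewrite (imset_f (fun r => [set Some r; None])) // inE rF.
move=> x y xX yX; apply: connect_trans (to_cone x xX) _.
by rewrite connect_adj_sym; apply: to_cone.
Qed.

Lemma card_cone_forest : #|cone_edges (cone_set F) X0| =
  #|induced_edges e (~: F)| + #|R| - #|F|.
Proof.
rewrite cone_induced_edges cardsU.
have -> : [set Some @: g | g : {set T} in induced_edges e (~: F)] :&: X0 = set0.
  apply/setP=> g; rewrite !inE; apply/negbTE/andP=> [[/imsetP[h _ ->]]].
  case/imsetP=> r _ hr; have : None \in Some @: h by rewrite hr set22.
  by case/imsetP.
rewrite cards0 subn0 card_imset; last exact/imset_inj/Some_inj.
rewrite card_imset; last by move=> r1 r2 /set2_eq[[] | []].
rewrite cardsD (setIidPr fvs_subset_reps) addnBA //.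
exact/subset_leq_card/fvs_subset_reps.
Qed.

End ForestCone.

Lemma acyclic_cone_tree F : acyclic_minus e F -> exists X0 : {set {set option T}},
  [/\ X0 \subset E0 T, {in X0, forall g : {set option T}, g \subset cone_set F},
      sub_connected (cone_set F) (cone_edges (cone_set F) X0)
    & #|cone_edges (cone_set F) X0| = #|cone_set F| - 1].
Proof.
move/acyclic_minusP=> acyc.
have [R [repR _ /iffRL/(_ acyc) cardT]] :=
  component_reps_card (induced_edges_simple (Y := ~: F) e_irr).
exists [set [set Some r; None] | r in R :\: F]; split.
- by apply/subsetP=> g /imsetP[r _ ->]; apply: imset_f.
- move=> g /imsetP[r]; rewrite inE => /andP[rF _] ->.
  by apply/subsetP=> z /set2P[] ->; rewrite ?mem_cone_set ?None_in_cone_set.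
- exact: cone_forest_connected.
rewrite card_cone_forest // card_cone_set.
by have := cardsC F; lia.
Qed.

Lemma cone_tree_acyclic (X : {set option T}) (X0 : {set {set option T}}) :
  X0 \subset E0 T -> sub_connected X (cone_edges X X0) ->
  #|cone_edges X X0| = #|X| - 1 -> None \in X ->
  acyclic_minus e [set v | Some v \notin X].
Proof.
move=> X0E connX cardX NX; apply/acyclic_minusP.
have XF : X = cone_set [set v | Some v \notin X].
  by apply/setP=> [[v|]]; rewrite ?mem_cone_set ?None_in_cone_set ?inE ?negbK.
have simpleX : simple (cone_edges X X0).
  apply: simpleU; first exact: induced_edges_simple cone_rel_irr.
  by move=> g /(subsetP X0E)/imsetP[v _ ->]; rewrite cards2.
have ltX : #|cone_edges X X0| < #|X|.
  by rewrite cardX subn1 prednK // card_gt0; apply/set0Pn; exists None.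
move/(has_cycle_imset Some_inj); rewrite -cone_induced_edges -XF.
by move/(has_cycle_subset (subsetUl _ X0)); apply: connected_acyclic connX.
Qed.

End Cone.

Section Colours.
Variables (T : finType) (t : nat) (c : T -> {set 'I_t}) (i : 'I_t).

Lemma ccount_setC (A : {set T}) :
  ccount c i [set: T] = ccount c i A + ccount c i (~: A).
Proof.
rewrite /ccount -(cardsID A [set v in [set: T] | i \in c v]).
by congr (_ + _); apply: eq_card => v; rewrite !inE andbC.
Qed.

Lemma ccount_cone_col (X : {set option T}) : None \in X ->
  ccount (cone_col c) i X = (ccount c i (~: [set v | Some v \notin X])).+1.
Proof.
move=> NX; rewrite /ccount.
set A := [set v in ~: _ | i \in c v].
have -> : [set z in X | i \in cone_col c z] = None |: Some @: A.
  apply/setP=> [[v|]]; rewrite !inE ?NX //= mem_imset; last exact: Some_inj.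
  by rewrite !inE negbK.
rewrite cardsU1 card_imset; last exact: Some_inj.
by have -> : None \notin Some @: A by apply/imsetP=> [[]].
Qed.

End Colours.

Theorem lemma4 (T : finType) (t : nat) (e : rel T) (c : T -> {set 'I_t})
    (k : 'I_t -> nat)
    (e_sym : symmetric e) (e_irr : irreflexive e)
    (c_ne : forall v, c v != set0) :
  (exists F : {set T}, fair_fvs e c k F) <->
  (exists (X : {set option T}) (X0 : {set {set option T}}),
     [/\ None \in X /\ X0 \subset E0 T,
         (* X0 consists of edges of G'[X], so (X, E[X\{v0}] u X0) is a subgraph *)
         (forall f, f \in X0 -> f \subset X) /\
           sub_connected X (induced_edges (cone_rel e) (X :\ None) :|: X0),
         #|induced_edges (cone_rel e) (X :\ None) :|: X0| = #|X| - 1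
       & forall i : 'I_t,
           ccount (cone_col c) i X + k i = ccount c i [set: T] + 1]).
Proof.
split=> [[F [acyc colF]] | [X [X0 [[NX X0E] [_ connX] cardX colX]]]].
  have [X0 [X0E X0X connX cardX]] := acyclic_cone_tree e_sym e_irr acyc.
  exists (cone_set F), X0; split=> //; first by rewrite None_in_cone_set.
  move=> i; rewrite ccount_cone_col ?None_in_cone_set // cone_setK.
  by rewrite (ccount_setC c i F) colF; lia.
exists [set v | Some v \notin X]; split.
  exact: cone_tree_acyclic X0E connX cardX NX.
move=> i; have := colX i.
by rewrite ccount_cone_col // (ccount_setC c i [set v | Some v \notin X]); lia.
Qed.
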